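(* Let $\mathbf A$ and $\mathbf B$ be t-algebras of type $\tau$ with traces $\mathsf a$ and $\mathsf b$. The following are equivalent: (1) $\mathbf B\in\mathrm V_E(\mathbf A)$ and the natural homomorphism $t^{\mathbf A}\mapsto t^{\mathbf B}$ from $\mathbf A^\uparrow$ onto $\mathbf B^\uparrow$ is uniformly continuous; (2) for every $s\in\mathsf b$, the t-subalgebra $\mathbf B_{\bar s}$ of $\mathbf B$ generated by $s$ is a t-homomorphic image of a t-subalgebra of a finite t-power of $\mathbf A$.
   Context: $\mathbb N=\{1,2,\dots\}$. A thread on $A$ is $s\in A^{\mathbb N}$; $r[a_1,\dots,a_n]$ is the thread with entries $a_i$ for $i\le n$ and $r_i$ for $i>n$; $r\equiv_{\mathbb N}s$ iff $\{i:r_i\neq s_i\}$ is finite, $[s]_{\mathbb N}$ its class. A trace on $A$ is a nonempty union of $\equiv_{\mathbb N}$-classes. A t-algebra of type $\tau$ and trace $\mathsf a$ is $(A,\mathsf a,\sigma^{\mathbf A})_{\sigma\in\tau}$ with $\sigma^{\mathbf A}:\mathsf a\to A$ arbitrary. t-subalgebra: $(C,\mathsf c,\sigma^{\mathbf A}|_{\mathsf c})$ with $C\subseteq A$, $\mathsf c\subseteq\mathsf a$ a trace on $C$, $\sigma^{\mathbf A}(\mathsf c)\subseteq C$. t-homomorphism: $h:A\to B$ with $h^{\mathbb N}(\mathsf a)\subseteq\mathsf b$ ($h^{\mathbb N}$ coordinatewise) and $h\circ\sigma^{\mathbf A}=\sigma^{\mathbf B}\circ h^{\mathbb N}$ on $\mathsf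 a$; onto (t-homomorphic image) if $h$ and $h^{\mathbb N}:\mathsf a\to\mathsf b$ are surjective. Finite t-power $\mathbf A^n$: universe $A^n$, trace $\mathsf a^n$ (a tuple $(r^1,\dots,r^n)$ of threads identified with the thread of entries $(r^1_i,\dots,r^n_i)$), operations componentwise. $\tau$-terms: least set containing $\mathsf e_1,\mathsf e_2,\dots$ and $\sigma(t_1,\dots,t_n,\mathsf e_{n+1},\dots)$; term operations $\mathsf e_i^{\mathbf A}(s)=s_i$, $\sigma(t_1,\dots,t_n,\mathsf e_{n+1},\dots)^{\mathbf A}(s)=\sigma^{\mathbf A}(s[t_1^{\mathbf A}(s),\dots,t_n^{\mathbf A}(s)])$; $\theta_{\mathbf A}=\{(t,u):t^{\mathbf A}=u^{\mathbf A}\}$; $\mathrm V_E(\mathbf A)=\{\mathbf B:\theta_{\mathbf A}\subseteq\theta_{\mathbf B}\}$ (the Et-variety generated by $\mathbf A$). $\mathbf B_{\bar s}$ ($s\in\mathsf b$): universe $\{t^{\mathbf B}(s)\}$, trace $[s]_{\mathbb N}\cap(B_{\bar s})^{\mathbb N}$. The term clone algebra $\mathbf A^\uparrow$ is the set $\{t^{\mathbf A}\}$ of term operations with $\mathsf e_i=\mathsf e_i^{\mathbf A}$, $\sigma=\sigma^{\mathbf A}$ and $q_n(\varphi,\psi_1,\dots,\psi_n)(s)=\varphi(s[\psi_1(s),\dots,\psi_n(s)])$. The natural homomorphism $t^{\mathbf A}\mapsto t^{\mathbf B}$ is uniformly continuous if for every $s\in\mathsf b$ there exist $n$ and $r^1,\dots,r^n\in\mathsf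 a$ such that for all $\tau$-terms $t,u$: $t^{\mathbf A}(r^j)=u^{\mathbf A}(r^j)$ for all $j\le n$ implies $t^{\mathbf B}(s)=u^{\mathbf B}(s)$. *)

From mathcomp Require Import all_boot.
Set Implicit Arguments.
Unset Strict Implicit.
Unset Printing Implicit Defensive.

(* Threads on A: indexed by N = {1,2,...}; we encode index i (>= 1) as
   the Rocq natural number i-1, so a thread is a function nat -> A. *)
Definition thread (A : Type) := nat -> A.

Definition eqN (A : Type) (r s : thread A) : Prop :=
  exists m : nat, forall i, m <= i -> r i = s i.

Definition is_trace_on (A : Type) (C : A -> Prop) (c : thread A -> Prop) : Prop :=
  [/\ (forall r, c r -> forall i, C (r i)),
      (exists r, c r)
    & (forall r s, eqN r s -> (forall i, C (s i)) -> c r -> c s)].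

Record talg (Sig : Type) := TAlg {
  carrier :> Type;
  tr : thread carrier -> Prop;
  op : Sig -> thread carrier -> carrier;   (* only its values on tr matter *)
  tr_trace : is_trace_on (fun _ => True) tr
}.

(* tau-terms: Var i is e_{i+1}; Op f [t_1;..;t_n] is f(t_1,..,t_n,e_{n+1},...) *)
Inductive term (Sig : Type) :=
| Var : nat -> term Sig
| Op : Sig -> seq (term Sig) -> term Sig.

Definition upd (A : Type) (r : thread A) (l : seq A) : thread A :=
  fun i => nth (r i) l i.

Fixpoint eval (Sig : Type) (A : Type) (o : Sig -> thread A -> A)
  (t : term Sig) (s : thread A) : A :=
  match t with
  | Var i => s i
  | Op f ts => o f (upd s (map (fun u => eval o u s) ts))
  end.

Definition top (Sig : Type) (A : talg Sig) (t : term Sig) (s : thread A) : A :=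
  eval (@op Sig A) t s.
Arguments top {Sig} A t s.

Definition theta (Sig : Type) (A : talg Sig) (t u : term Sig) : Prop :=
  forall s, @tr Sig A s -> top A t s = top A u s.

Definition in_VE (Sig : Type) (A B : talg Sig) : Prop :=
  forall t u, theta A t u -> theta B t u.

Definition unif_cont (Sig : Type) (A B : talg Sig) : Prop :=
  forall s, @tr Sig B s ->
    exists (n : nat) (r : 'I_n -> thread A),
      (forall j, @tr Sig A (r j)) /\
      (forall t u, (forall j, top A t (r j) = top A u (r j)) ->
                   top B t s = top B u s).

(* Finite t-power A^n: universe 'I_n -> A, trace a^n, componentwise ops.
   A thread of A^n is identified with an n-tuple of threads of A. *)
Definition pow_tr (Sig : Type) (A : talg Sig) (n : nat)
  (r : thread ('I_n -> A)) : Prop :=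
  forall j : 'I_n, @tr Sig A (fun i => r i j).

Definition pow_op (Sig : Type) (A : talg Sig) (n : nat)
  (f : Sig) (r : thread ('I_n -> A)) : 'I_n -> A :=
  fun j => @op Sig A f (fun i => r i j).
Arguments pow_op {Sig} A {n} f r.
Arguments pow_tr {Sig} A {n} r.

Definition is_tsub_pow (Sig : Type) (A : talg Sig) (n : nat)
  (C : ('I_n -> A) -> Prop) (c : thread ('I_n -> A) -> Prop) : Prop :=
  [/\ is_trace_on C c,
      (forall r, c r -> pow_tr A r)
    & (forall f r, c r -> C (pow_op A f r))].

Definition gen_univ (Sig : Type) (B : talg Sig) (s : thread B) (y : B) : Prop :=
  exists t, y = top B t s.

Definition gen_tr (Sig : Type) (B : talg Sig) (s : thread B) (w : thread B) : Prop :=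
  eqN s w /\ forall i, gen_univ s (w i).

(* B_{\bar s} is a t-homomorphic image (via h) of the t-subalgebra (C, c)
   of A^n, whose operations are those of A^n restricted to c; the operations
   of B_{\bar s} are those of B restricted to its trace. *)
Definition onto_thom_gen (Sig : Type) (A B : talg Sig) (n : nat)
  (C : ('I_n -> A) -> Prop) (c : thread ('I_n -> A) -> Prop)
  (s : thread B) (h : ('I_n -> A) -> B) : Prop :=
  [/\ (forall x, C x -> gen_univ s (h x)),
      (forall r, c r -> gen_tr s (fun i => h (r i))),
      (forall f r, c r -> h (pow_op A f r) = @op Sig B f (fun i => h (r i))),
      (forall y, gen_univ s y -> exists2 x, C x & h x = y)
    & (forall w, gen_tr s w -> exists2 r, c r & (fun i => h (r i)) = w)].

Arguments is_tsub_pow {Sig} A {n} C c.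
Arguments gen_univ {Sig} B s y.
Arguments gen_tr {Sig} B s w.
Arguments onto_thom_gen {Sig} A B {n} C c s h.
Arguments in_VE {Sig} A B.
Arguments unif_cont {Sig} A B.
Arguments theta {Sig} A t u.

From mathcomp Require Import all_boot.
From Stdlib Require Import FunctionalExtensionality ClassicalEpsilon.

Set Implicit Arguments.
Unset Strict Implicit.

(* Term operations of a finite t-power [A^n] act coordinatewise, so [t^A] and
   [u^A] agreeing on threads [r^1, ..., r^n] of [A] says exactly that [t] and
   [u] agree on the single thread [r = (r^1, ..., r^n)] of [A^n]. Hence uniform
   continuity at [s] makes [t^{A^n}(r) |-> t^B(s)] well defined, and this map
   sends the t-subalgebra of [A^n] generated by [r] onto [B_{\bar s}].
   Conversely, [s] is itself a thread of [B_{\bar s}]; lifting it along the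
   onto t-homomorphism gives threads of [A] witnessing uniform continuity at
   [s]. Membership in [V_E(A)] follows from uniform continuity alone. *)

Section TermInduction.

Variables (Sig : Type) (P : term Sig -> Prop).
Hypothesis P_Var : forall i, P (Var Sig i).
Hypothesis P_Op : forall f ts, (forall t, List.In t ts -> P t) -> P (Op f ts).

Fixpoint term_ind_In (t : term Sig) : P t :=
  match t with
  | Var i => P_Var i
  | Op f ts => P_Op f ((fix all_In (l : seq (term Sig)) : forall u, List.In u l -> P u :=
       match l with
       | nil => fun _ inl => False_ind _ inl
       | cons x l' => fun u inl => match inl with
                     | or_introl e => eq_ind x P (term_ind_In x) u e
                     | or_intror inl' => all_In l' u inl'
                     end
       end) ts)
  end.

End TermInduction.

Lemma nth_In_ind (X : Type) (P : X -> Prop) (l : seq X) d i :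
  P d -> (forall x, List.In x l -> P x) -> P (nth d l i).
Proof.
elim: l i => [|x l IHl] [|i] //= Pd Pl; first by apply: Pl; left.
by apply: IHl => // y ly; apply: Pl; right.
Qed.

Lemma upd_In_ind (X : Type) (P : X -> Prop) (r : thread X) (l : seq X) i :
  (forall j, P (r j)) -> (forall x, List.In x l -> P x) -> P (upd r l i).
Proof. by move=> Pr; apply: nth_In_ind. Qed.

Lemma eqN_upd (X : Type) (r : thread X) (l : seq X) : eqN r (upd r l).
Proof. by exists (size l) => i li; rewrite /upd nth_default. Qed.

Lemma comp_upd (X Y : Type) (g : X -> Y) (r : thread X) (l : seq X) :
  (fun i => g (upd r l i)) = upd (fun i => g (r i)) (map g l).
Proof.
apply: functional_extensionality => i; rewrite /upd.
by move: (r i); elim: l i => [|x l IHl] [|i] d //=.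
Qed.

(* Finitely many choices, one per index below the bound of [eqN], so no
   choice principle is needed. *)
Lemma eqN_upd_map (X Y : Type) (F : Y -> X) (r w : thread X) :
  eqN r w -> (forall i, exists y, w i = F y) ->
  exists l, w = upd r (map F l).
Proof.
move=> [m rw] wF.
have prefix k : exists l, size l = k /\ forall i, i < k -> upd r (map F l) i = w i.
  elim: k => [|k [l [sz_l wl]]]; first by exists [::].
  have [y wky] := wF k.
  exists (rcons l y); split; first by rewrite size_rcons sz_l.
  move=> i; rewrite ltnS leq_eqVlt => /orP[/eqP->|ik].
    by rewrite /upd map_rcons nth_rcons size_map sz_l ltnn eqxx.
  by rewrite /upd map_rcons nth_rcons size_map sz_l ik; apply: wl.
have [l [sz_l wl]] := prefix m.
exists l; apply: functional_extensionality => i.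
case: (ltnP i m) => [/wl //|mi].
by rewrite /upd nth_default ?size_map ?sz_l // rw.
Qed.

Section GeneratedSubalgebra.

Variables (Sig : Type) (D : talg Sig) (r : thread D).

Lemma gen_trE w :
  gen_tr D r w <-> exists l, w = upd r (map (fun t => top D t r) l).
Proof.
split=> [[rw w_gen] | [l ->]]; first exact: eqN_upd_map.
split; first exact: eqN_upd.
move=> i; apply: upd_In_ind => [j|y /List.in_map_iff [t [<- _]]].
  by exists (Var Sig j).
by exists t.
Qed.

Lemma gen_tr_refl : gen_tr D r r.
Proof.
apply gen_trE; exists [::].
by apply: functional_extensionality => i; rewrite /upd nth_nil.
Qed.

Lemma gen_tr_trace : is_trace_on (gen_univ D r) (gen_tr D r).
Proof.
split; [by move=> w [] | by exists r; apply: gen_tr_refl |].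
move=> w1 w2 [m w12] w2_gen [[m' rw1] _]; split => //.
exists (maxn m m') => i; rewrite geq_max => /andP[mi m'i].
by rewrite (rw1 i m'i) (w12 i mi).
Qed.

Lemma gen_tr_sub w : tr r -> gen_tr D r w -> tr w.
Proof.
have [_ _ tr_closed] := tr_trace D.
by move=> trr [rw _]; apply: tr_closed trr.
Qed.

Lemma gen_univ_op f w : gen_tr D r w -> gen_univ D r (op f w).
Proof. by move=> /gen_trE [l ->]; exists (Op f l). Qed.

End GeneratedSubalgebra.

Section SubalgebraHom.

Variables (Sig : Type) (D E : talg Sig).
Variables (C : D -> Prop) (c : thread D -> Prop) (h : D -> E).
Hypothesis c_trace : is_trace_on C c.
Hypothesis C_op : forall f w, c w -> C (op f w).
Hypothesis h_op : forall f w, c w -> h (op f w) = op f (fun i => h (w i)).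

Lemma tsub_upd w l : c w -> (forall x, List.In x l -> C x) -> c (upd w l).
Proof.
have [c_C _ c_closed] := c_trace.
move=> cw lC; apply: (c_closed w) => //; first exact: eqN_upd.
by move=> i; apply: upd_In_ind => // j; apply: c_C cw j.
Qed.

Lemma tsub_top t w : c w -> C (top D t w).
Proof.
have [c_C _ _] := c_trace.
elim/term_ind_In: t w => [i|f ts IHts] w cw; first exact: c_C.
apply: C_op; apply: tsub_upd => // y /List.in_map_iff [t [<- tsi]].
exact: IHts.
Qed.

Lemma thom_top t w : c w -> h (top D t w) = top E t (fun i => h (w i)).
Proof.
elim/term_ind_In: t w => [i|f ts IHts] w cw //.
have cw' : c (upd w (map (fun u => top D u w) ts)).
  by apply: tsub_upd => // y /List.in_map_iff [t [<- _]]; apply: tsub_top.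
rewrite [LHS]h_op // comp_upd -map_comp.
rewrite /top /=; congr (op f (upd _ _)).
by apply: List.map_ext_in => u tsu /=; apply: IHts.
Qed.

End SubalgebraHom.

Section Power.

Variables (Sig : Type) (A : talg Sig) (n : nat).

Lemma pow_tr_trace : is_trace_on (fun _ => True) (pow_tr A (n := n)).
Proof.
have [_ [r0 trr0] tr_closed] := tr_trace A.
split=> //; first by exists (fun i _ => r0 i).
move=> r s [m rs] _ trr j; apply: (tr_closed (fun i => r i j)) => //.
by exists m => i mi; rewrite (rs i mi).
Qed.

Definition pow_talg : talg Sig := TAlg (@pow_op Sig A n) pow_tr_trace.

Lemma top_pow t (r : thread ('I_n -> A)) j :
  top pow_talg t r j = top A t (fun i => r i j).
Proof.
elim/term_ind_In: t r => [i|f ts IHts] r //.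
rewrite /top /= /pow_op; congr (op f _).
apply: etrans (comp_upd (fun x : 'I_n -> A => x j) _ _) _.
rewrite -map_comp; congr upd.
by apply: List.map_ext_in => u tsu /=; apply: IHts.
Qed.

Lemma gen_tsub_pow (r : thread ('I_n -> A)) :
  pow_tr A r -> is_tsub_pow A (gen_univ pow_talg r) (gen_tr pow_talg r).
Proof.
move=> trr; split.
- exact: (gen_tr_trace (D := pow_talg)).
- by move=> w; apply: (gen_tr_sub (D := pow_talg)).
- exact: (gen_univ_op (D := pow_talg)).
Qed.

End Power.

Section GeneratedImage.

Variables (Sig : Type) (D E : talg Sig) (r : thread D) (s : thread E).
Variable h : D -> E.
Hypothesis h_top : forall t, h (top D t r) = top E t s.

Lemma comp_gen_upd l :
  (fun i => h (upd r (map (fun t => top D t r) l) i)) =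
  upd s (map (fun t => top E t s) l).
Proof.
rewrite comp_upd -map_comp.
have -> : (fun i => h (r i)) = s.
  by apply: functional_extensionality => i; apply: (h_top (Var Sig i)).
by congr (upd s); apply: eq_map => t /=; apply: h_top.
Qed.

Lemma gen_image_univ x : gen_univ D r x -> gen_univ E s (h x).
Proof. by move=> [t ->]; exists t; rewrite h_top. Qed.

Lemma gen_image_tr w : gen_tr D r w -> gen_tr E s (fun i => h (w i)).
Proof.
by move=> /gen_trE [l ->]; rewrite comp_gen_upd; apply/gen_trE; exists l.
Qed.

Lemma gen_image_op f w :
  gen_tr D r w -> h (op f w) = op f (fun i => h (w i)).
Proof.
move=> /gen_trE [l ->]; rewrite comp_gen_upd.
exact: (h_top (Op f l)).
Qed.

Lemma gen_image_univ_onto y :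
  gen_univ E s y -> exists2 x, gen_univ D r x & h x = y.
Proof. by move=> [t ->]; exists (top D t r); [exists t | apply: h_top]. Qed.

Lemma gen_image_tr_onto w :
  gen_tr E s w -> exists2 v, gen_tr D r v & (fun i => h (v i)) = w.
Proof.
move=> /gen_trE [l ->]; exists (upd r (map (fun t => top D t r) l)).
  by apply/gen_trE; exists l.
exact: comp_gen_upd.
Qed.

End GeneratedImage.

Definition gen_pow_images (Sig : Type) (A B : talg Sig) : Prop :=
  forall s : thread B, @tr Sig B s ->
    exists (n : nat) (C : ('I_n -> A) -> Prop) (c : thread ('I_n -> A) -> Prop),
      is_tsub_pow A C c /\
      exists h : ('I_n -> A) -> B, onto_thom_gen A B C c s h.

Lemma unif_cont_gen_pow_images (Sig : Type) (A B : talg Sig) :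
  unif_cont A B -> gen_pow_images A B.
Proof.
move=> UC s trs; have [n [R [trR R_sep]]] := UC s trs.
pose P := pow_talg A n; pose r : thread P := fun i j => R j i.
have inh : inhabited (term Sig) := inhabits (Var Sig 0).
pose h (x : P) := top B (epsilon inh (fun t => x = top P t r)) s.
have h_top t : h (top P t r) = top B t s.
  have := epsilon_spec inh (fun u => top P t r = top P u r) (ex_intro _ t erefl).
  move=> tu; symmetry; apply: R_sep => j.
  by have := congr1 (fun x => x j) tu; rewrite !top_pow.
exists n, (gen_univ P r), (gen_tr P r); split; first exact: gen_tsub_pow trR.
exists h; split.
- exact: (gen_image_univ h_top).
- exact: (gen_image_tr h_top).
- exact: (gen_image_op h_top).
- exact: (gen_image_univ_onto h_top).
- exact: (gen_image_tr_onto h_top).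
Qed.

Lemma gen_pow_images_unif_cont (Sig : Type) (A B : talg Sig) :
  gen_pow_images A B -> unif_cont A B.
Proof.
move=> images s trs.
have [n [C [c [[c_trace c_pow C_op] [h [_ _ h_op _ h_tr_onto]]]]]] := images s trs.
have [r cr hr] := h_tr_onto s (gen_tr_refl s).
exists n, (fun j i => r i j); split=> [j|t u tu]; first exact: c_pow.
have tu_pow : top (pow_talg A n) t r = top (pow_talg A n) u r.
  by apply: functional_extensionality => j; rewrite !top_pow.
rewrite -hr -!(thom_top (D := pow_talg A n) c_trace C_op h_op) //.
by rewrite tu_pow.
Qed.

Lemma unif_cont_in_VE (Sig : Type) (A B : talg Sig) :
  unif_cont A B -> in_VE A B.
Proof.
move=> UC t u thetaA s trs; have [n [R [trR R_sep]]] := UC s trs.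
by apply: R_sep => j; apply: thetaA.
Qed.

Theorem mainTheorem19 (Sig : Type) (A B : talg Sig) :
  (in_VE A B /\ unif_cont A B) <->
  (forall s : thread B, @tr Sig B s ->
     exists (n : nat) (C : ('I_n -> A) -> Prop) (c : thread ('I_n -> A) -> Prop),
       is_tsub_pow A C c /\
       exists h : ('I_n -> A) -> B, onto_thom_gen A B C c s h).
Proof.
split=> [[_] | images]; first exact: unif_cont_gen_pow_images.
have UC := gen_pow_images_unif_cont images.
by split; [apply: unif_cont_in_VE |].
Qed.
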